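(* In the setting below, suppose $u(s,t,q)=l(s,q)U(t)$, $v(s,t,q)=m(s,q)V(t)$, $w(s,t,q)=n(s,q)W(t)$, $x(s,t,q)=p(s,q)X(t)$ with all factors of class $C^1$, and assume $U(t_0)=U'(t_0)=V(t_0)=V'(t_0)=0$. Then $\mathbf r$ is an isogeodesic of $\mathbf P$ at $(t_0,q_0)$ if and only if for all $s\in[L_1,L_2]$: $$n(s,q_0)W(t_0)=0,\qquad p(s,q_0)X(t_0)=0,$$ $$n(s,q_0)\,W'(t_0)\,\frac{\partial p}{\partial q}(s,q_0)\,X(t_0)-\frac{\partial n}{\partial q}(s,q_0)\,W(t_0)\,p(s,q_0)\,X'(t_0)\neq0.$$
   Context: $\mathbf r:[L_1,L_2]\to\mathbb R^4$ is an arc-length curve with Frenet frame $\{\mathbf T,\mathbf N,\mathbf B_1,\mathbf B_2\}$ (orthonormal, $\mathbf T=\mathbf r'$, $\mathbf T'=k_1\mathbf N$, $\mathbf N'=-k_1\mathbf T+k_2\mathbf B_1$, $\mathbf B_1'=-k_2\mathbf N+k_3\mathbf B_2$, $\mathbf B_2'=-k_3\mathbf B_1$, $k_1>0$), and $\mathbf P(s,t,q)=\mathbf r(s)+u\mathbf T(s)+v\mathbf N(s)+w\mathbf B_1(s)+x\mathbf B_2(s)$ on $[L_1,L_2]\times[T_1,T_2]\times[Q_1,Q_2]$, with $t_0\in[T_1,T_2]$, $q_0\in[Q_1,Q_2]$ fixed. ''$\mathbf r$ is an isogeodesic of $\mathbf P$ at $(t_0,q_0)$'' means: $\mathbf P(s,t_0,q_0)=\mathbf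 r(s)$ for all $s$, $\partial_s\mathbf P,\partial_t\mathbf P,\partial_q\mathbf P$ are linearly independent at $(s,t_0,q_0)$, and $\mathbf N(s)$ is parallel to the normal $\partial_s\mathbf P\otimes\partial_t\mathbf P\otimes\partial_q\mathbf P$ (four-dimensional vector product) at $(s,t_0,q_0)$, for all $s$. *)

From Stdlib Require Import Reals.
Open Scope R_scope.

Record V4 := mkV4 { c0 : R; c1 : R; c2 : R; c3 : R }.

Definition vzero : V4 := mkV4 0 0 0 0.
Definition vadd (a b : V4) : V4 :=
  mkV4 (c0 a + c0 b) (c1 a + c1 b) (c2 a + c2 b) (c3 a + c3 b).
Definition vscale (k : R) (a : V4) : V4 :=
  mkV4 (k * c0 a) (k * c1 a) (k * c2 a) (k * c3 a).
Definition dot (a b : V4) : R :=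
  c0 a * c0 b + c1 a * c1 b + c2 a * c2 b + c3 a * c3 b.

Definition vderiv (f : R -> V4) (t : R) (d : V4) : Prop :=
  derivable_pt_lim (fun y => c0 (f y)) t (c0 d) /\
  derivable_pt_lim (fun y => c1 (f y)) t (c1 d) /\
  derivable_pt_lim (fun y => c2 (f y)) t (c2 d) /\
  derivable_pt_lim (fun y => c3 (f y)) t (c3 d).

Definition det3 (a1 a2 a3 b1 b2 b3 x1 x2 x3 : R) : R :=
  a1 * (b2 * x3 - b3 * x2) - a2 * (b1 * x3 - b3 * x1) + a3 * (b1 * x2 - b2 * x1).

(* Four-dimensional vector product a (x) b (x) c : the formal determinant
   with first row the standard basis e0,e1,e2,e3 and rows a, b, c. *)
Definition cross4 (a b c : V4) : V4 :=
  mkV4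
    (det3 (c1 a) (c2 a) (c3 a) (c1 b) (c2 b) (c3 b) (c1 c) (c2 c) (c3 c))
    (- det3 (c0 a) (c2 a) (c3 a) (c0 b) (c2 b) (c3 b) (c0 c) (c2 c) (c3 c))
    (det3 (c0 a) (c1 a) (c3 a) (c0 b) (c1 b) (c3 b) (c0 c) (c1 c) (c3 c))
    (- det3 (c0 a) (c1 a) (c2 a) (c0 b) (c1 b) (c2 b) (c0 c) (c1 c) (c2 c)).

Definition lin_indep3 (a b c : V4) : Prop :=
  forall x y z : R,
    vadd (vscale x a) (vadd (vscale y b) (vscale z c)) = vzero ->
    x = 0 /\ y = 0 /\ z = 0.

Definition parallel (a b : V4) : Prop := exists k : R, a = vscale k b.

Definition frenet_curve (r T N B1 B2 : R -> V4) (k1 k2 k3 : R -> R) : Prop :=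
  (forall s,
     dot (T s) (T s) = 1 /\ dot (N s) (N s) = 1 /\
     dot (B1 s) (B1 s) = 1 /\ dot (B2 s) (B2 s) = 1 /\
     dot (T s) (N s) = 0 /\ dot (T s) (B1 s) = 0 /\ dot (T s) (B2 s) = 0 /\
     dot (N s) (B1 s) = 0 /\ dot (N s) (B2 s) = 0 /\ dot (B1 s) (B2 s) = 0) /\
  (forall s, vderiv r s (T s)) /\
  (forall s, vderiv T s (vscale (k1 s) (N s))) /\
  (forall s, vderiv N s (vadd (vscale (- k1 s) (T s)) (vscale (k2 s) (B1 s)))) /\
  (forall s, vderiv B1 s (vadd (vscale (- k2 s) (N s)) (vscale (k3 s) (B2 s)))) /\
  (forall s, vderiv B2 s (vscale (- k3 s) (B1 s))) /\
  (forall s, 0 < k1 s).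

Definition surfP (r T N B1 B2 : R -> V4) (u v w x : R -> R -> R -> R)
  (s t q : R) : V4 :=
  vadd (r s) (vadd (vscale (u s t q) (T s)) (vadd (vscale (v s t q) (N s))
    (vadd (vscale (w s t q) (B1 s)) (vscale (x s t q) (B2 s))))).

Definition isogeodesic (P : R -> R -> R -> V4) (r N : R -> V4)
  (L1 L2 t0 q0 : R) : Prop :=
  forall s, L1 <= s <= L2 ->
    P s t0 q0 = r s /\
    exists Ps Pt Pq : V4,
      vderiv (fun y => P y t0 q0) s Ps /\
      vderiv (fun y => P s y q0) t0 Pt /\
      vderiv (fun y => P s t0 y) q0 Pq /\
      lin_indep3 Ps Pt Pq /\
      parallel (cross4 Ps Pt Pq) (N s).

Definition cont2 (f : R -> R -> R) : Prop :=
  forall a b eps, 0 < eps -> exists del, 0 < del /\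
    forall a' b', Rabs (a' - a) < del -> Rabs (b' - b) < del ->
      Rabs (f a' b' - f a b) < eps.

Definition C1_2 (f fs fq : R -> R -> R) : Prop :=
  (forall s q, derivable_pt_lim (fun y => f y q) s (fs s q)) /\
  (forall s q, derivable_pt_lim (fun y => f s y) q (fq s q)) /\
  cont2 fs /\ cont2 fq.

Definition C1_1 (g g' : R -> R) : Prop :=
  (forall t, derivable_pt_lim g t (g' t)) /\ continuity g'.

From Pilot Require Import Defs.
From Stdlib Require Import Reals Lra.
Open Scope R_scope.

(* Because
   U(t0) = U'(t0) = V(t0) = V'(t0) = 0, at (s, t0, q0):
     P       = r + (n W) B1 + (p X) B2,
     dP/dt   = (n W') B1 + (p X') B2,
     dP/dq   = (n_q W) B1 + (p_q X) B2,
     dP/ds   = T + (n_s W) B1 + (p_s X) B2      (once n W = p X = 0).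
   So P(s,t0,q0) = r(s) iff n W = p X = 0 (B1, B2 are orthonormal).  With the
   partials in this form the remaining conditions are pure linear algebra:
   - the three partials are independent iff the 2x2 determinant D of the
     B1,B2-coefficients of dP/dt and dP/dq is nonzero (T is orthogonal to
     B1, B2);
   - their vector product is D (T x B1 x B2), and T x B1 x B2 = +-N because
     its squared norm and its squared product with N are Gram determinants
     of the orthonormal frame; so the normal is always parallel to N. *)

Ltac coords := cbn [Defs.c0 Defs.c1 Defs.c2 Defs.c3].

Lemma V4_ext (a b : V4) :
  Defs.c0 a = Defs.c0 b -> Defs.c1 a = Defs.c1 b ->
  Defs.c2 a = Defs.c2 b -> Defs.c3 a = Defs.c3 b -> a = b.
Proof. destruct a, b; coords; intros; subst; reflexivity. Qed.

Ltac vcoords := apply V4_ext; unfold vadd, vscale, vzero; coords.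

Lemma dot_comm (a b : V4) : dot a b = dot b a.
Proof. unfold dot; ring. Qed.

Lemma vadd_cancel_l (a d : V4) : vadd a d = a -> d = vzero.
Proof.
  intro E.
  transitivity (vadd (vadd a d) (vscale (-1) a)); [vcoords; ring |].
  rewrite E; vcoords; ring.
Qed.

Lemma dot_self_eq0 (a : V4) : dot a a = 0 -> a = vzero.
Proof.
  destruct a as [a0 a1 a2 a3]; unfold dot; coords; intro H.
  assert (a0 = 0 /\ a1 = 0 /\ a2 = 0 /\ a3 = 0) as (-> & -> & -> & ->) by nra.
  reflexivity.
Qed.

Lemma dot_vzero_r (e : V4) : dot e vzero = 0.
Proof. unfold dot, vzero; coords; ring. Qed.

Lemma dot_comb2 (e b c : V4) (y z : R) :
  dot e (vadd (vscale y b) (vscale z c)) = y * dot e b + z * dot e c.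
Proof. unfold dot, vadd, vscale; coords; ring. Qed.

Definition orthonormal3 (a b c : V4) : Prop :=
  dot a a = 1 /\ dot b b = 1 /\ dot c c = 1 /\
  dot a b = 0 /\ dot a c = 0 /\ dot b c = 0.

(* The orthonormality conditions of a frame, in the order of frenet_curve. *)
Definition orthonormal4 (a b c d : V4) : Prop :=
  dot a a = 1 /\ dot b b = 1 /\ dot c c = 1 /\ dot d d = 1 /\
  dot a b = 0 /\ dot a c = 0 /\ dot a d = 0 /\
  dot b c = 0 /\ dot b d = 0 /\ dot c d = 0.

Lemma orthonormal4_drop2 (a b c d : V4) :
  orthonormal4 a b c d -> orthonormal3 a c d.
Proof. unfold orthonormal4, orthonormal3; tauto. Qed.

Lemma orthonormal2_coeffs (b c : V4) (y z : R) :
  dot b b = 1 -> dot c c = 1 -> dot b c = 0 ->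
  vadd (vscale y b) (vscale z c) = vzero -> y = 0 /\ z = 0.
Proof.
  intros hbb hcc hbc E.
  pose proof (f_equal (dot b) E) as Eb; pose proof (f_equal (dot c) E) as Ec.
  rewrite dot_comb2, dot_vzero_r in Eb, Ec.
  rewrite (dot_comm c b) in Ec.
  rewrite hbb, hbc in Eb; rewrite hcc, hbc in Ec.
  split; lra.
Qed.

Lemma orthonormal3_coeffs (a b c : V4) (x y z : R) :
  orthonormal3 a b c ->
  vadd (vscale x a) (vadd (vscale y b) (vscale z c)) = vzero ->
  x = 0 /\ y = 0 /\ z = 0.
Proof.
  intros (haa & hbb & hcc & hab & hac & hbc) E.
  assert (Ea : dot a (vadd (vscale x a) (vadd (vscale y b) (vscale z c))) = x).
  { transitivity (x * dot a a + y * dot a b + z * dot a c);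
      [unfold dot, vadd, vscale; coords; ring | rewrite haa, hab, hac; ring]. }
  rewrite E, dot_vzero_r in Ea.
  assert (Hx : x = 0) by lra.
  subst x.
  assert (E' : vadd (vscale y b) (vscale z c) = vzero).
  { rewrite <- E; vcoords; ring. }
  destruct (orthonormal2_coeffs b c y z hbb hcc hbc E'); auto.
Qed.

Lemma cramer2 (al be ga de y z : R) :
  al * de - be * ga <> 0 -> y * al + z * ga = 0 -> y * be + z * de = 0 ->
  y = 0 /\ z = 0.
Proof.
  intros HD E1 E2.
  assert (Ey : y * (al * de - be * ga) = 0).
  { transitivity (de * (y * al + z * ga) - ga * (y * be + z * de));
      [ring | rewrite E1, E2; ring]. }
  assert (Ez : z * (al * de - be * ga) = 0).
  { transitivity (al * (y * be + z * de) - be * (y * al + z * ga));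
      [ring | rewrite E1, E2; ring]. }
  destruct (Rmult_integral _ _ Ey), (Rmult_integral _ _ Ez); tauto.
Qed.

(* If two combinations v, w of b, c are independent together with some third
   vector, their coefficient determinant D is nonzero: otherwise the
   relations  de v - be w = D b  and  al w - ga v = D c  are dependencies. *)
Lemma lin_indep3_det (a b c : V4) (al be ga de : R) :
  lin_indep3 a (vadd (vscale al b) (vscale be c)) (vadd (vscale ga b) (vscale de c)) ->
  al * de - be * ga <> 0.
Proof.
  set (v := vadd (vscale al b) (vscale be c)).
  set (w := vadd (vscale ga b) (vscale de c)).
  intros Hind HD.
  assert (Eb : vadd (vscale 0 a) (vadd (vscale de v) (vscale (- be) w))
               = vscale (al * de - be * ga) b) by (unfold v, w; vcoords; ring).
  assert (Ec : vadd (vscale 0 a) (vadd (vscale (- ga) v) (vscale al w))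
               = vscale (al * de - be * ga) c) by (unfold v, w; vcoords; ring).
  rewrite HD in Eb, Ec.
  assert (Hz : forall e, vscale 0 e = vzero) by (intro e; vcoords; ring).
  rewrite (Hz b) in Eb; rewrite (Hz c) in Ec.
  destruct (Hind _ _ _ Eb) as (_ & Hde & Hbe).
  destruct (Hind _ _ _ Ec) as (_ & Hga & Hal).
  assert (Ev : vadd (vscale 0 a) (vadd (vscale 1 v) (vscale 0 w)) = vzero).
  { assert (Hal0 : al = 0) by lra; assert (Hbe0 : be = 0) by lra.
    unfold v, w; rewrite Hal0, Hbe0; vcoords; ring. }
  destruct (Hind _ _ _ Ev) as (_ & H1 & _).
  lra.
Qed.

Lemma lin_indep3_frame (a b c : V4) (c1 c2 al be ga de : R) :
  orthonormal3 a b c -> al * de - be * ga <> 0 ->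
  lin_indep3 (vadd a (vadd (vscale c1 b) (vscale c2 c)))
    (vadd (vscale al b) (vscale be c)) (vadd (vscale ga b) (vscale de c)).
Proof.
  intros Hon HD x y z E.
  assert (E' : vadd (vscale x a)
                 (vadd (vscale (x * c1 + y * al + z * ga) b)
                       (vscale (x * c2 + y * be + z * de) c)) = vzero).
  { rewrite <- E; vcoords; ring. }
  destruct (orthonormal3_coeffs _ _ _ _ _ _ Hon E') as (Hx & Hb & Hc).
  subst x.
  destruct (cramer2 al be ga de y z HD) as [Hy Hz]; [lra | lra | auto].
Qed.

Definition det4 (a11 a12 a13 a14 a21 a22 a23 a24 a31 a32 a33 a34
                 a41 a42 a43 a44 : R) : R :=
  a11 * det3 a22 a23 a24 a32 a33 a34 a42 a43 a44
  - a12 * det3 a21 a23 a24 a31 a33 a34 a41 a43 a44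
  + a13 * det3 a21 a22 a24 a31 a32 a34 a41 a42 a44
  - a14 * det3 a21 a22 a23 a31 a32 a33 a41 a42 a43.

(* dot (a x b x c) e is the determinant with rows a, b, c, e; its square is
   the Gram determinant of a, b, c, e. *)
Lemma cross4_dot_sq (a b c e : V4) :
  (dot (cross4 a b c) e) ^ 2 =
  det4 (dot a a) (dot a b) (dot a c) (dot a e)
       (dot b a) (dot b b) (dot b c) (dot b e)
       (dot c a) (dot c b) (dot c c) (dot c e)
       (dot e a) (dot e b) (dot e c) (dot e e).
Proof.
  destruct a as [a0 a1 a2 a3], b as [b0 b1 b2 b3], c as [d0 d1 d2 d3],
    e as [e0 e1 e2 e3].
  unfold cross4, det4, det3, dot; coords; ring.
Qed.

Lemma cross4_norm_sq (a b c : V4) :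
  dot (cross4 a b c) (cross4 a b c) =
  det3 (dot a a) (dot a b) (dot a c)
       (dot b a) (dot b b) (dot b c)
       (dot c a) (dot c b) (dot c c).
Proof.
  destruct a as [a0 a1 a2 a3], b as [b0 b1 b2 b3], c as [d0 d1 d2 d3].
  unfold cross4, det3, dot; coords; ring.
Qed.

(* For an orthonormal frame (a, b, c, d), a x c x d = k b with k = +-1:
   |a x c x d|^2 = 1 and ((a x c x d).b)^2 = 1, so |a x c x d - k b|^2 = 0. *)
Lemma cross4_orthonormal (a b c d : V4) :
  orthonormal4 a b c d ->
  cross4 a c d = vscale (dot (cross4 a c d) b) b.
Proof.
  intros (haa & hbb & hcc & hdd & hab & hac & had & hbc & hbd & hcd).
  set (C := cross4 a c d); set (k := dot C b).
  assert (HCC : dot C C = 1).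
  { unfold C; rewrite cross4_norm_sq, (dot_comm c a), (dot_comm d a), (dot_comm d c),
      haa, hcc, hdd, hac, had, hcd; unfold det3; ring. }
  assert (Hk : k ^ 2 = 1).
  { unfold k, C; rewrite cross4_dot_sq, (dot_comm c a), (dot_comm d a), (dot_comm d c),
      (dot_comm b a), (dot_comm c b), (dot_comm d b),
      haa, hbb, hcc, hdd, hab, hac, had, hbc, hbd, hcd; unfold det4, det3; ring. }
  assert (Hdiff : dot (vadd C (vscale (- k) b)) (vadd C (vscale (- k) b)) = 0).
  { transitivity (dot C C - 2 * k * dot C b + k ^ 2 * dot b b);
      [unfold dot, vadd, vscale; coords; ring | fold k; rewrite HCC, hbb; nra]. }
  apply dot_self_eq0 in Hdiff.
  transitivity (vadd (vadd C (vscale (- k) b)) (vscale k b)); [vcoords; ring |].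
  rewrite Hdiff; vcoords; ring.
Qed.

(* The vector product is multilinear and alternating, so replacing the last
   two factors by combinations of b, c multiplies it by their determinant. *)
Lemma cross4_combination (a b c : V4) (c1 c2 al be ga de : R) :
  cross4 (vadd a (vadd (vscale c1 b) (vscale c2 c)))
    (vadd (vscale al b) (vscale be c)) (vadd (vscale ga b) (vscale de c)) =
  vscale (al * de - be * ga) (cross4 a b c).
Proof. unfold cross4, det3; vcoords; ring. Qed.

Lemma cross4_combination_parallel (a b c d : V4) (c1 c2 al be ga de : R) :
  orthonormal4 a b c d ->
  parallel (cross4 (vadd a (vadd (vscale c1 c) (vscale c2 d)))
              (vadd (vscale al c) (vscale be d)) (vadd (vscale ga c) (vscale de d))) b.
Proof.
  intros Hon.
  exists ((al * de - be * ga) * dot (cross4 a c d) b).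
  rewrite cross4_combination, (cross4_orthonormal a b c d Hon) at 1.
  vcoords; ring.
Qed.

Lemma vderiv_unique (f : R -> V4) (y : R) (a b : V4) :
  vderiv f y a -> vderiv f y b -> a = b.
Proof.
  intros (A0 & A1 & A2 & A3) (B0 & B1 & B2 & B3).
  apply V4_ext; eapply uniqueness_limite; eassumption.
Qed.

Lemma vderiv_ext (f : R -> V4) (y : R) (a b : V4) :
  vderiv f y a -> a = b -> vderiv f y b.
Proof. intros H <-; exact H. Qed.

Lemma vderiv_const (c : V4) (y : R) : vderiv (fun _ => c) y vzero.
Proof. repeat split; apply derivable_pt_lim_const. Qed.

Lemma vderiv_vadd (f g : R -> V4) (y : R) (a b : V4) :
  vderiv f y a -> vderiv g y b -> vderiv (fun z => vadd (f z) (g z)) y (vadd a b).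
Proof.
  intros (A0 & A1 & A2 & A3) (B0 & B1 & B2 & B3).
  repeat split; apply derivable_pt_lim_plus; assumption.
Qed.

Lemma vderiv_vscale (k : R -> R) (f : R -> V4) (y dk : R) (a : V4) :
  derivable_pt_lim k y dk -> vderiv f y a ->
  vderiv (fun z => vscale (k z) (f z)) y (vadd (vscale dk (f y)) (vscale (k y) a)).
Proof.
  intros Hk (A0 & A1 & A2 & A3).
  repeat split; apply derivable_pt_lim_mult; assumption.
Qed.

Lemma deriv_scal_l (f : R -> R) (y d c : R) :
  derivable_pt_lim f y d -> derivable_pt_lim (fun z => c * f z) y (c * d).
Proof. exact (derivable_pt_lim_scal f c y d). Qed.

Lemma deriv_scal_r (f : R -> R) (y d c : R) :
  derivable_pt_lim f y d -> derivable_pt_lim (fun z => f z * c) y (d * c).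
Proof.
  intro H.
  replace (d * c) with (d * c + f y * 0) by ring.
  exact (derivable_pt_lim_mult f (fun _ => c) y d 0 H (derivable_pt_lim_const c y)).
Qed.

Ltac differentiate :=
  repeat first
    [ apply vderiv_vadd | apply vderiv_const | apply vderiv_vscale
    | apply deriv_scal_l | apply deriv_scal_r
    | match goal with H : _ |- _ => apply H end ].

Section SeparableSurface.

Variables (r T N B1 B2 : R -> V4) (k1 k2 k3 : R -> R) (t0 q0 : R)
  (l m n p ls lq ms mq ns nq ps pq : R -> R -> R)
  (U V W X W' X' : R -> R).

Hypotheses (HU0 : U t0 = 0) (HV0 : V t0 = 0)
  (HU'0 : derivable_pt_lim U t0 0) (HV'0 : derivable_pt_lim V t0 0).

Hypotheses
  (Hr : forall s, vderiv r s (T s))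
  (HT : forall s, vderiv T s (vscale (k1 s) (N s)))
  (HN : forall s, vderiv N s (vadd (vscale (- k1 s) (T s)) (vscale (k2 s) (B1 s))))
  (HB1 : forall s, vderiv B1 s (vadd (vscale (- k2 s) (N s)) (vscale (k3 s) (B2 s))))
  (HB2 : forall s, vderiv B2 s (vscale (- k3 s) (B1 s))).

Hypotheses
  (Hls : forall s q, derivable_pt_lim (fun y => l y q) s (ls s q))
  (Hms : forall s q, derivable_pt_lim (fun y => m y q) s (ms s q))
  (Hns : forall s q, derivable_pt_lim (fun y => n y q) s (ns s q))
  (Hps : forall s q, derivable_pt_lim (fun y => p y q) s (ps s q))
  (Hlq : forall s q, derivable_pt_lim (fun y => l s y) q (lq s q))
  (Hmq : forall s q, derivable_pt_lim (fun y => m s y) q (mq s q))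
  (Hnq : forall s q, derivable_pt_lim (fun y => n s y) q (nq s q))
  (Hpq : forall s q, derivable_pt_lim (fun y => p s y) q (pq s q)).

Hypotheses
  (HW : forall t, derivable_pt_lim W t (W' t))
  (HX : forall t, derivable_pt_lim X t (X' t)).

Local Notation P :=
  (surfP r T N B1 B2 (fun s t q => l s q * U t) (fun s t q => m s q * V t)
     (fun s t q => n s q * W t) (fun s t q => p s q * X t)).

Lemma surf_at_t0 (s : R) :
  P s t0 q0 = vadd (r s) (vadd (vscale (n s q0 * W t0) (B1 s)) (vscale (p s q0 * X t0) (B2 s))).
Proof. unfold surfP; vcoords; rewrite HU0, HV0; ring. Qed.

Lemma surf_deriv_t (s : R) :
  vderiv (fun y => P s y q0) t0
    (vadd (vscale (n s q0 * W' t0) (B1 s)) (vscale (p s q0 * X' t0) (B2 s))).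
Proof.
  eapply vderiv_ext; [unfold surfP; differentiate |].
  vcoords; ring.
Qed.

Lemma surf_deriv_q (s : R) :
  vderiv (fun y => P s t0 y) q0
    (vadd (vscale (nq s q0 * W t0) (B1 s)) (vscale (pq s q0 * X t0) (B2 s))).
Proof.
  eapply vderiv_ext; [unfold surfP; differentiate |].
  vcoords; rewrite HU0, HV0; ring.
Qed.

(* Where P(s,t0,q0) = r(s), the terms carrying the frame derivatives vanish. *)
Lemma surf_deriv_s (s : R) :
  n s q0 * W t0 = 0 -> p s q0 * X t0 = 0 ->
  vderiv (fun y => P y t0 q0) s
    (vadd (T s) (vadd (vscale (ns s q0 * W t0) (B1 s)) (vscale (ps s q0 * X t0) (B2 s)))).
Proof.
  intros Hw Hx.
  eapply vderiv_ext; [unfold surfP; differentiate |].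
  vcoords; rewrite HU0, HV0, Hw, Hx; ring.
Qed.

End SeparableSurface.

Theorem mainTheorem4
  (r T N B1 B2 : R -> V4) (k1 k2 k3 : R -> R)
  (L1 L2 T1 T2 Q1 Q2 t0 q0 : R)
  (l m n p ls lq ms mq ns nq ps pq : R -> R -> R)
  (U V W X U' V' W' X' : R -> R) :
  frenet_curve r T N B1 B2 k1 k2 k3 ->
  T1 <= t0 <= T2 -> Q1 <= q0 <= Q2 ->
  C1_2 l ls lq -> C1_2 m ms mq -> C1_2 n ns nq -> C1_2 p ps pq ->
  C1_1 U U' -> C1_1 V V' -> C1_1 W W' -> C1_1 X X' ->
  U t0 = 0 -> U' t0 = 0 -> V t0 = 0 -> V' t0 = 0 ->
  (isogeodesic
     (surfP r T N B1 B2
        (fun s t q => l s q * U t) (fun s t q => m s q * V t)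
        (fun s t q => n s q * W t) (fun s t q => p s q * X t))
     r N L1 L2 t0 q0
   <->
   forall s, L1 <= s <= L2 ->
     n s q0 * W t0 = 0 /\ p s q0 * X t0 = 0 /\
     n s q0 * W' t0 * pq s q0 * X t0 - nq s q0 * W t0 * p s q0 * X' t0 <> 0).
Proof.
  intros Hfr _ _ Cl Cm Cn Cp CU CV CW CX HU0 HU'0 HV0 HV'0.
  destruct Hfr as (Horth & Hr & HT & HN & HB1 & HB2 & _).
  destruct Cl as (Hls & Hlq & _), Cm as (Hms & Hmq & _),
    Cn as (Hns & Hnq & _), Cp as (Hps & Hpq & _).
  destruct CU as (HU & _), CV as (HV & _), CW as (HW & _), CX as (HX & _).
  assert (HUt0 : derivable_pt_lim U t0 0) by (rewrite <- HU'0; apply HU).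
  assert (HVt0 : derivable_pt_lim V t0 0) by (rewrite <- HV'0; apply HV).
  assert (Hdet : forall s, n s q0 * W' t0 * pq s q0 * X t0 - nq s q0 * W t0 * p s q0 * X' t0
    = (n s q0 * W' t0) * (pq s q0 * X t0) - (p s q0 * X' t0) * (nq s q0 * W t0))
    by (intro; ring).
  split.
  - intros Hiso s Hs.
    destruct (Hiso s Hs) as (HP & Ps & Pt & Pq & _ & HPt & HPq & Hind & _).
    destruct (Horth s) as (_ & _ & h11 & h22 & _ & _ & _ & _ & _ & h12).
    rewrite surf_at_t0 in HP by assumption.
    apply vadd_cancel_l in HP.
    destruct (orthonormal2_coeffs _ _ _ _ h11 h22 h12 HP) as [Hw Hx].
    eassert (Et : Pt = _)
      by (eapply vderiv_unique; [exact HPt | eapply surf_deriv_t; eassumption]).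
    eassert (Eq : Pq = _)
      by (eapply vderiv_unique; [exact HPq | eapply surf_deriv_q; eassumption]).
    rewrite Et, Eq in Hind.
    split; [exact Hw | split; [exact Hx |]].
    rewrite Hdet; exact (lin_indep3_det _ _ _ _ _ _ _ Hind).
  - intros Hcond s Hs.
    destruct (Hcond s Hs) as (Hw & Hx & HD).
    assert (Hon : orthonormal4 (T s) (N s) (B1 s) (B2 s)) by exact (Horth s).
    split.
    + rewrite surf_at_t0, Hw, Hx by assumption; vcoords; ring.
    + do 3 eexists.
      split; [eapply surf_deriv_s; eassumption |].
      split; [eapply surf_deriv_t; eassumption |].
      split; [eapply surf_deriv_q; eassumption |].
      split.
      * apply lin_indep3_frame; [exact (orthonormal4_drop2 _ _ _ _ Hon) | rewrite <- Hdet; exact HD].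
      * apply cross4_combination_parallel; exact Hon.
Qed.
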